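(* Let $(k_n)$ be a nondecreasing integer sequence, $(V^*_n)$ vertices of interest, and $\mathbf{\Phi}=(\Phi_n)$ a VN rule, and let $h_{\Phi_n}(g_1,\mathfrak{o}_n(g_2),V^*_n)=\sum_{v\in V^*_n}\mathbf{1}\{\mathrm{rank}_{\Phi_n(g_1,\mathfrak{o}_n(g_2),V^*_n)}(\mathfrak{o}_n(v))\le k_n\}$. Let $(\hat h_{\Phi_n})_n$ be any sequence of label-agnostic estimators of $(h_{\Phi_n})_n$, i.e. satisfying $\hat h_{\Phi_n}(g_1,\mathfrak{o}_n(g_2),V^*_n)=\hat h_{\Phi_n}(g_1,\mathfrak{o}_n(g_2'),V^*_n)$ whenever $g_2\simeq g_2'$ (graph isomorphism). Then there exist sequences of nested-core nominatable distributions $\mathbf{F}=(F_n)$ and $\mathbf{F}'=(F_n')$ such that for all $n$ sufficiently large, if $(G_1,G_2)\sim F_n$ and $(G_1',G_2')\sim F_n'$, then $d_{\mathrm{TV}}\big(\mathcal{L}(h_{\Phi_n}(G_1,\mathfrak{o}(G_2),V^*_n)),\mathcal{L}(h_{\Phi_n}(G_1',\mathfrak{o}(G_2'),V^*_n))\big)>0$, while $\mathcal{L}(\hat h_{\Phi_n}(G_1,\mathfrak{o}(G_2),V^*_n))=\mathcal{L}(\hat h_{\Phi_n}(G_1',\mathfrak{o}(G_2'),V^*_n))$.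
   Context: $\mathcal{L}(X)$ denotes the law of $X$ and $d_{\mathrm{TV}}$ total variation distance. $\mathcal{G}_n$ denotes labeled graphs on $n$ vertices. A nominatable distribution of order $(n,m)$ is a distribution on $\mathcal{G}_n\times\mathcal{G}_m$ with vertex sets $V_1=\{v_1,\dots,v_n\}$, $V_2=\{u_1,\dots,u_m\}$, $v_i=u_i$ for $i\le c$ (core $C$), disjoint junk sets $J_1=V_1\setminus C$, $J_2=V_2\setminus C$, and $G_1[J_1]$, $G_2[J_2]$ conditionally independent given the parameter. A sequence of such distributions has nested cores if eventually the vertex sets of the first graphs, of the second graphs, and the cores are increasing in $n$. An obfuscating function is a bijection $\mathfrak{o}$ from $V_2$ onto a set $W$ disjoint from $V_1,V_2$. For $u\in V(g)$, $\mathcal{I}(u;g)$ is the orbit of $u$ under automorphisms of $g$. A VN scheme $\Phi_n$ maps $(g_1,\mathfrak{o}(g_2),V^* )$ with $V^*\subset V_1$ to a total ordering of $W$, such that the set of positions of $\mathfrak{o}(\mathcal{I}(u;g_2))$ does not depend on the choice of obfuscating function $\mathfrak{o}$ (for every $g_1,g_2,V^*,u$); $\mathrm{rank}(\cdot)$ denotes position in this ordering. A VN rule is a sequence of VN schemes. *)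

From HB Require Import structures.
From mathcomp Require Import all_boot all_order all_algebra.
From mathcomp Require Import fingroup perm reals.
Set Implicit Arguments. Unset Strict Implicit. Unset Printing Implicit Defensive.
Import Order.TTheory GRing.Theory Num.Theory.
Local Open Scope ring_scope.

(* A labeled simple graph on the vertex set 'I_n (vertex i stands for v_(i+1)),
   given by its (symmetric, irreflexive) set of ordered adjacent pairs. *)
Definition is_graph n (E : {set 'I_n * 'I_n}) : bool :=
  [forall i, forall j, ((i, j) \in E) == ((j, i) \in E)] &&
  [forall i, (i, i) \notin E].

Definition graph n := {E : {set 'I_n * 'I_n} | is_graph E}.

Definition relabel_set n (s : {perm 'I_n}) (E : {set 'I_n * 'I_n}) :
  {set 'I_n * 'I_n} := [set e | ((s^-1)%g e.1, (s^-1)%g e.2) \in E].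

Lemma relabel_is_graph n (s : {perm 'I_n}) (E : {set 'I_n * 'I_n}) :
  is_graph E -> is_graph (relabel_set s E).
Proof.
case/andP=> /forallP Hs /forallP Hi; apply/andP; split.
  apply/forallP=> i; apply/forallP=> j; rewrite !inE /=.
  exact: (forallP (Hs _)).
by apply/forallP=> i; rewrite inE /=; apply: Hi.
Qed.

Definition relabel n (s : {perm 'I_n}) (g : graph n) : graph n :=
  exist _ (relabel_set s (val g)) (relabel_is_graph s (valP g)).

Definition isomorphic n (g g' : graph n) : Prop :=
  exists s : {perm 'I_n}, relabel s g = g'.

Definition aut_orbit n (u : 'I_n) (g : graph n) : {set 'I_n} :=
  [set w | [exists a : {perm 'I_n}, (relabel a g == g) && (a u == w)]].

(* Obfuscating functions V2 -> W are represented by permutations o of 'I_m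
   (W is an abstract copy of 'I_m, disjoint from V1, V2); o(g2) = relabel o g2.
   A total ordering of W is a permutation p : position of w is (p w) + 1. *)
Definition VN_scheme n m
  (Phi : graph n -> graph m -> {set 'I_n} -> {perm 'I_m}) : Prop :=
  forall (g1 : graph n) (g2 : graph m) (Vs : {set 'I_n}) (u : 'I_m)
         (o o' : {perm 'I_m}),
    [set Phi g1 (relabel o g2) Vs (o w) | w in aut_orbit u g2] =
    [set Phi g1 (relabel o' g2) Vs (o' w) | w in aut_orbit u g2].

(* h_Phi(g1, o(g2), Vstar) = sum_{v in Vstar} 1{ rank(o(v)) <= k }; a core vertex
   v = v_i of V1 is the vertex u_i of V2 (same index). *)
Definition hPhi n m (Phi : graph n -> graph m -> {set 'I_n} -> {perm 'I_m})
  (k : nat) (g1 : graph n) (g2 : graph m) (o : {perm 'I_m}) (Vs : {set 'I_n})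
  : nat :=
  #|[set v in Vs | [exists w : 'I_m,
       (val w == val v) && ((Phi g1 (relabel o g2) Vs (o w)).+1 <= k)%N]]|.

Definition label_agnostic n m (T : Type)
  (hh : graph n -> graph m -> {set 'I_n} -> T) : Prop :=
  forall (g1 : graph n) (g2 g2' : graph m) (Vs : {set 'I_n}) (o : {perm 'I_m}),
    isomorphic g2 g2' -> hh g1 (relabel o g2) Vs = hh g1 (relabel o g2') Vs.

(* V1 = {v_1..v_n} is encoded by the labels 0..n-1 (a label universe nat);
   V2 = {u_1..u_m} has labels lab : 'I_m -> nat; core C = first c vertices. *)
Definition core n (c : nat) : {set 'I_n} := [set i : 'I_n | (i < c)%N].
Definition junk n (c : nat) : {set 'I_n} := [set i : 'I_n | (c <= i)%N].

Definition induced n (J : {set 'I_n}) (g : graph n) : {set 'I_n * 'I_n} :=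
  [set e in val g | (e.1 \in J) && (e.2 \in J)].

Definition is_distr (R : realType) (X : finType) (P : {ffun X -> R}) : Prop :=
  (forall x, 0 <= P x) /\ \sum_x P x = 1.

Definition nominatable (R : realType) n m (c : nat) (lab : 'I_m -> nat)
  (P : {ffun graph n * graph m -> R}) : Prop :=
  [/\ (c <= n)%N /\ (c <= m)%N,
      injective lab,
      (forall i : 'I_m, (i < c)%N -> lab i = i),
      (forall i : 'I_m, (c <= i)%N -> (n <= lab i)%N) /\
      is_distr P &
      forall A B,
        \sum_(x | (induced (junk n c) x.1 == A) && (induced (junk m c) x.2 == B)) P x
        = (\sum_(x | induced (junk n c) x.1 == A) P x) *
          (\sum_(x | induced (junk m c) x.2 == B) P x)].

Definition nested_nominatable (R : realType) (m c : nat -> nat)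
  (lab : forall n, 'I_(m n) -> nat)
  (P : forall n, {ffun graph n * graph (m n) -> R}) : Prop :=
  (forall n, nominatable (c n) (lab n) (P n)) /\
  exists N, forall n, (N <= n)%N ->
    (c n <= c n.+1)%N /\
    (forall i : 'I_(m n), exists j : 'I_(m n.+1), lab n.+1 j = lab n i).

Definition law (R : realType) (X : finType) (Y : eqType) (P : {ffun X -> R})
  (f : X -> Y) (y : Y) : R := \sum_(x | f x == y) P x.

Definition dTV (R : realType) (X X' : finType) (Y : eqType)
  (P : {ffun X -> R}) (f : X -> Y) (P' : {ffun X' -> R}) (f' : X' -> Y) : R :=
  2^-1 * \sum_(y <- undup ([seq f x | x <- enum X] ++ [seq f' x | x <- enum X']))
           `|law P f y - law P' f' y|.

From HB Require Import structures.
From mathcomp Require Import all_boot all_order all_algebra.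
From mathcomp Require Import fingroup perm reals.
From mathcomp Require Import zify.
Set Implicit Arguments. Unset Strict Implicit. Unset Printing Implicit Defensive.
Import Order.TTheory GRing.Theory Num.Theory.

(** A label-agnostic estimator sees the second graph only up to isomorphism,
    whereas h_Phi reads the labels of its vertices. Take for G2 a rigid graph
    (a path plus a hub vertex) on n + k_n + 6 vertices: its automorphism
    orbits are singletons, so a VN scheme ranks the vertices of a relabelled
    copy s(G2) by the ranking of G2 composed with s^-1. A transposition s that
    moves a vertex of interest into or out of the top k_n changes h_Phi, so the
    point masses at (G1, G2) and (G1, s(G2)) give distinct laws of h_Phi and
    equal laws of any label-agnostic estimator. *)

Lemma relabel1 n (g : graph n) : relabel 1%g g = g.
Proof.
apply: val_inj; apply/setP => -[x y].
by rewrite /= /relabel_set inE invg1 !perm1.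
Qed.

Lemma relabelM n (s t : {perm 'I_n}) (g : graph n) :
  relabel t (relabel s g) = relabel (s * t)%g g.
Proof.
by apply: val_inj; apply/setP => e; rewrite /= /relabel_set !inE /= invMg !permM.
Qed.

Definition nbr n (g : graph n) (u : 'I_n) : {set 'I_n} := [set w | (u, w) \in val g].

Lemma relabel_edge n (a : {perm 'I_n}) (g : graph n) u w :
  relabel a g = g -> ((a u, a w) \in val g) = ((u, w) \in val g).
Proof. by move=> aut; rewrite -{1}aut /= /relabel_set inE /= !permK. Qed.

Lemma card_nbr_aut n (a : {perm 'I_n}) (g : graph n) u :
  relabel a g = g -> #|nbr g (a u)| = #|nbr g u|.
Proof.
move=> aut; rewrite -(card_preimset _ (@perm_inj _ a)).
by apply: eq_card => w; rewrite !inE relabel_edge.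
Qed.

Definition rigid n (g : graph n) : Prop :=
  forall a : {perm 'I_n}, relabel a g = g -> a = 1%g.

Lemma aut_orbit_rigid n (g : graph n) u : rigid g -> aut_orbit u g = [set u].
Proof.
move=> g_rigid; apply/setP => w; rewrite !inE; apply/existsP/eqP.
  by case=> a /andP[/eqP/g_rigid -> /eqP <-]; rewrite perm1.
by move=> ->; exists 1%g; rewrite relabel1 perm1 !eqxx.
Qed.

Definition count_top n m (Hnm : (n <= m)%N) (r : {perm 'I_m}) (Vs : {set 'I_n})
  (k : nat) : nat :=
  #|[set v in Vs | (r (widen_ord Hnm v) < k)%N]|.

Section RigidVN.
Variables (n m : nat) (Phi : graph n -> graph m -> {set 'I_n} -> {perm 'I_m}).
Variable g : graph m.
Hypotheses (Phi_VN : VN_scheme Phi) (g_rigid : rigid g).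

Lemma VN_scheme_rigid g1 Vs (s o : {perm 'I_m}) w :
  Phi g1 (relabel o (relabel s g)) Vs (o w) = Phi g1 g Vs ((s^-1)%g w).
Proof.
have := Phi_VN g1 g Vs ((s^-1)%g w) (s * o)%g 1%g.
rewrite aut_orbit_rigid // !imset_set1 relabel1 perm1 => /set1_inj.
by rewrite relabelM permM permKV.
Qed.

Lemma hPhi_relabel_rigid k (Hnm : (n <= m)%N) g1 Vs (s o : {perm 'I_m}) :
  hPhi Phi k g1 (relabel s g) o Vs = count_top Hnm (s^-1 * Phi g1 g Vs)%g Vs k.
Proof.
apply: eq_card => v; rewrite !inE permM; congr (_ && _); apply/existsP/idP.
  case=> w /andP[/eqP wv]; rewrite VN_scheme_rigid.
  by have -> : w = widen_ord Hnm v by apply: val_inj.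
by move=> top; exists (widen_ord Hnm v); rewrite eqxx VN_scheme_rigid.
Qed.

End RigidVN.

Lemma set_ord_mem_pmap m (s : seq nat) :
  [set w : 'I_m | (w : nat) \in s] = [set w | w \in pmap insub s].
Proof. by apply/setP => w; rewrite !inE mem_pmap_sub. Qed.

Lemma card_ord_mem_le m (s : seq nat) :
  (#|[set w : 'I_m | (w : nat) \in s]| <= size s)%N.
Proof.
by rewrite set_ord_mem_pmap cardsE (leq_trans (card_size _)) // size_pmap_sub count_size.
Qed.

Lemma card_ord_mem m (s : seq nat) :
  uniq s -> all (fun x => x < m)%N s -> #|[set w : 'I_m | (w : nat) \in s]| = size s.
Proof.
move=> s_uniq s_lt.
rewrite set_ord_mem_pmap cardsE (card_uniqP (pmap_sub_uniq _ s_uniq)) size_pmap_sub.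
by move: s_lt; rewrite all_count => /eqP.
Qed.

Definition rigid_edge m (i j : nat) : bool :=
  ((j == i.+1) && (j < m.-1)%N) || ((j == m.-1) && (i < m.-2)%N).

Definition rigid_adj m (i j : 'I_m) : bool := rigid_edge m i j || rigid_edge m j i.

Lemma rigid_adj_is_graph m : is_graph [set e : 'I_m * 'I_m | rigid_adj e.1 e.2].
Proof.
apply/andP; split.
  by apply/forallP => i; apply/forallP => j; rewrite !inE /rigid_adj orbC.
by apply/forallP => i; rewrite inE /rigid_adj /rigid_edge /= orbb; lia.
Qed.

(* The path 0 - 1 - ... - (m-2) together with a hub m-1 adjacent to every path
   vertex except the endpoint m-2. *)
Definition rigid_graph m : graph m :=
  exist _ [set e | rigid_adj e.1 e.2] (rigid_adj_is_graph m).

Section RigidGraph.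
Variable m : nat.
Hypothesis m_ge6 : (6 <= m)%N.
Local Notation G := (rigid_graph m).

Lemma card_nbr_hub (v : 'I_m) : (v : nat) = m.-1 -> (4 <= #|nbr G v|)%N.
Proof.
move=> hub; rewrite (_ : 4 = size [:: 0; 1; 2; 3])%N // -(@card_ord_mem m) //.
  apply: subset_leq_card; apply/subsetP => w; rewrite !inE /rigid_adj /rigid_edge /=.
  by move: (ltn_ord w); lia.
by apply/and5P; split; lia.
Qed.

Lemma card_nbr_nonhub (v : 'I_m) : (v : nat) != m.-1 -> (#|nbr G v| <= 3)%N.
Proof.
move=> nonhub; apply: leq_trans (card_ord_mem_le m [:: v.-1; v.+1; m.-1]).
apply: subset_leq_card; apply/subsetP => w; rewrite !inE /rigid_adj /rigid_edge /=.
lia.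
Qed.

Lemma rigid_graph_rigid : rigid G.
Proof.
move=> a aut.
have adj_aut u w : rigid_adj (a u) (a w) = rigid_adj u w.
  by have := relabel_edge u w aut; rewrite !inE.
have fix_hub (v : 'I_m) : (v : nat) = m.-1 -> a v = v.
  move=> hub; apply: val_inj => /=; rewrite hub; apply/eqP; apply: contraT => moved.
  have := card_nbr_nonhub moved; rewrite card_nbr_aut //.
  by have := card_nbr_hub hub; lia.
have hub_lt : (m.-1 < m)%N by lia.
have [h hub] : exists h : 'I_m, (h : nat) = m.-1 by exists (Ordinal hub_lt).
(* the endpoint m-2 is the only other vertex not adjacent to the hub *)
have fix_end (v : 'I_m) : (v : nat) = m.-2 -> a v = v.
  move=> vend; have : ~~ rigid_adj (a h) (a v).
    by rewrite adj_aut /rigid_adj /rigid_edge; lia.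
  rewrite fix_hub // /rigid_adj /rigid_edge => nadj.
  have av_nonhub : (a v : nat) != m.-1.
    rewrite -hub; apply/eqP => /ord_inj; rewrite -{1}(fix_hub h hub) => /perm_inj vh.
    by move: vend; rewrite vh hub; lia.
  by apply: val_inj => /=; move: (ltn_ord (a v)) av_nonhub nadj; rewrite hub; lia.
have fix_above d (v : 'I_m) : (m.-2 <= v + d)%N -> a v = v.
  elim: d v => [|d IH] v vd.
    by case: (ltnP v m.-1) => ?; [apply: fix_end | apply: fix_hub];
      move: (ltn_ord v); lia.
  case: (leqP m.-2 (v + d)) => vd'; first exact: IH.
  have succ_lt : (v.+1 < m)%N by lia.
  have fix_succ : a (Ordinal succ_lt) = Ordinal succ_lt by apply: IH => /=; lia.
  have av_le : (a v <= v)%N.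
    rewrite leqNgt; apply/negP => vlt.
    have /perm_inj av : a (a v) = a v by apply: IH; lia.
    by rewrite av ltnn in vlt.
  have : rigid_adj (a v) (Ordinal succ_lt).
    by rewrite -fix_succ adj_aut /rigid_adj /rigid_edge /=; lia.
  move=> adj; apply: val_inj => /=; move: adj av_le.
  by rewrite /rigid_adj /rigid_edge /=; lia.
by apply/permP => v; rewrite perm1; apply: (fix_above m); lia.
Qed.

End RigidGraph.

Lemma exists_ord_ge_rank_ge m n k (r : {perm 'I_m}) :
  (n + k < m)%N -> exists2 y : 'I_m, (n <= y)%N & (k <= r y)%N.
Proof.
move=> nkm.
have : ~~ ([set y : 'I_m | (y : nat) \in iota n (m - n)]
           \subset r @^-1: [set p : 'I_m | (p : nat) \in iota 0 k]).
  apply: contraTN nkm => /subset_leq_card.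
  rewrite card_ord_mem ?iota_uniq //; last by apply/allP => x; rewrite mem_iota; lia.
  rewrite size_iota card_preimset; last exact: perm_inj.
  by move/leq_trans/(_ (card_ord_mem_le m (iota 0 k))); rewrite size_iota; lia.
by case/subsetPn => y; rewrite !inE !mem_iota => yA yB; exists y; lia.
Qed.

(* Swapping a top-ranked vertex of interest with a low-ranked junk vertex, or,
   when no vertex of interest is top-ranked, with the vertex ranked first. *)
Lemma exists_perm_count_top_neq n m k (Hnm : (n <= m)%N) (r : {perm 'I_m})
  (Vs : {set 'I_n}) : (n + k < m)%N -> (0 < k)%N -> Vs != set0 ->
  exists s : {perm 'I_m}, count_top Hnm (s * r)%g Vs k != count_top Hnm r Vs k.
Proof.
move=> nkm k_gt0 Vs_n0; set e := widen_ord Hnm.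
case: (boolP [exists v in Vs, (r (e v) < k)%N]) => [|no_top].
  case/existsP => v0 /andP[v0Vs v0top].
  have [y ny ky] := exists_ord_ge_rank_ge r nkm.
  exists (tperm (e v0) y); rewrite neq_ltn; apply/orP; left.
  apply: proper_card; apply/properP; split; last first.
    by exists v0; rewrite !inE v0Vs ?permM ?tpermL //=; lia.
  apply/subsetP => v; rewrite !inE permM -/(e v) => /andP[-> /=].
  have [<-|v_neq] := eqVneq (e v0) (e v); first by rewrite tpermL; lia.
  by rewrite tpermD // -val_eqE /=; move: (ltn_ord v); lia.
have count0 : count_top Hnm r Vs k = 0%N.
  apply/eqP; rewrite cards_eq0; apply/eqP/setP => v; rewrite !inE.
  by apply/negbTE; apply: contraNN no_top => top; apply/existsP; exists v.
have [v1 v1Vs] := set0Pn _ Vs_n0.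
have m_gt0 : (0 < m)%N by lia.
exists (tperm (e v1) ((r^-1)%g (Ordinal m_gt0))); rewrite count0 -lt0n card_gt0.
by apply/set0Pn; exists v1; rewrite !inE v1Vs permM tpermL permKV.
Qed.

Local Open Scope ring_scope.

Definition point_mass (R : realType) (X : finType) (x0 : X) : {ffun X -> R} :=
  [ffun x => (x == x0)%:R].

Lemma sum_point_mass (R : realType) (X : finType) (x0 : X) (p : pred X) :
  \sum_(x | p x) point_mass R x0 x = (p x0)%:R.
Proof.
rewrite big_mkcond (bigD1 x0) //= big1 ?addr0 => [|x /negbTE x_neq];
  by rewrite ffunE ?eqxx ?x_neq; case: (p _).
Qed.

Lemma law_point_mass (R : realType) (X : finType) (Y : eqType) (f : X -> Y) x0 y :
  law (point_mass R x0) f y = (f x0 == y)%:R.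
Proof. exact: sum_point_mass. Qed.

Lemma law_point_mass_eq (R : realType) (X : finType) (Y : eqType) (f : X -> Y)
  (x0 x1 : X) : f x0 = f x1 -> law (point_mass R x0) f =1 law (point_mass R x1) f.
Proof. by move=> f_eq y; rewrite !law_point_mass f_eq. Qed.

Lemma dTV_point_mass_gt0 (R : realType) (X : finType) (Y : eqType) (f : X -> Y)
  (x0 x1 : X) : f x0 != f x1 -> 0 < dTV (point_mass R x0) f (point_mass R x1) f.
Proof.
move=> f_neq; apply: mulr_gt0; first by rewrite invr_gt0 ltr0n.
rewrite (bigD1_seq (f x0)) ?undup_uniq //=; last first.
  by rewrite mem_undup mem_cat map_f ?mem_enum.
rewrite !law_point_mass eqxx eq_sym (negbTE f_neq) subr0 normr1.
by rewrite ltr_pwDl // sumr_ge0.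
Qed.

Lemma nested_nominatable_point_mass (R : realType) (m : nat -> nat)
  (x : forall n, graph n * graph (m n)) :
  (forall n, n <= m n)%N -> (forall n, m n <= m n.+1)%N ->
  nested_nominatable id (fun n (i : 'I_(m n)) => val i) (fun n => point_mass R (x n)).
Proof.
move=> n_le_m m_mono; split=> [n|].
  split=> [||||A B] //; first exact: val_inj.
    split=> //; split=> [y|]; first by rewrite ffunE ler0n.
    by rewrite (sum_point_mass _ _ predT).
  by rewrite !sum_point_mass; case: (_ == A); case: (_ == B); rewrite ?mul1r ?mul0r.
by exists 0%N => n _; split=> // i; exists (widen_ord (m_mono n) i).
Qed.

Theorem lemma1 (R : realType) (T : eqType) (k : nat -> nat)
  (Vs : forall n, {set 'I_n})
  (Phi : forall n m, graph n -> graph m -> {set 'I_n} -> {perm 'I_m})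
  (hhat : forall n m, graph n -> graph m -> {set 'I_n} -> T) :
  (forall n, (k n <= k n.+1)%N) ->
  (exists N, forall n, (N <= n)%N -> (0 < k n)%N /\ Vs n != set0) ->
  (forall n m, VN_scheme (Phi n m)) ->
  (forall n m, label_agnostic (hhat n m)) ->
  exists (m c c' : nat -> nat) (lab lab' : forall n, 'I_(m n) -> nat)
         (P P' : forall n, {ffun graph n * graph (m n) -> R}),
    [/\ nested_nominatable c lab P,
        nested_nominatable c' lab' P',
        (forall n, Vs n \subset core n (c n)),
        (forall n, Vs n \subset core n (c' n)) &
        exists N, forall n, (N <= n)%N -> forall o : {perm 'I_(m n)},
          0 < dTV (P n) (fun x => hPhi (Phi n (m n)) (k n) x.1 x.2 o (Vs n))
                  (P' n) (fun x => hPhi (Phi n (m n)) (k n) x.1 x.2 o (Vs n))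
          /\ law (P n) (fun x => hhat n (m n) x.1 (relabel o x.2) (Vs n))
             =1 law (P' n) (fun x => hhat n (m n) x.1 (relabel o x.2) (Vs n))].
Proof.
move=> k_mono [N HN] Phi_VN hhat_agnostic.
pose m n := (n + k n + 6)%N.
have n_le_m n : (n <= m n)%N by rewrite /m; lia.
have m_mono n : (m n <= m n.+1)%N by have := k_mono n; rewrite /m; lia.
pose g1 n := rigid_graph n.
pose G n := rigid_graph (m n).
pose top n (s : {perm 'I_(m n)}) :=
  count_top (n_le_m n) (s^-1 * Phi n (m n) (g1 n) (G n) (Vs n))%g (Vs n) (k n).
pose s n := odflt 1%g [pick s | top n s != top n 1%g].
exists m, id, id, (fun n i => val i), (fun n i => val i),
  (fun n => point_mass R (g1 n, G n)),
  (fun n => point_mass R (g1 n, relabel (s n) (G n))).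
split; try exact: nested_nominatable_point_mass;
  try by move=> n; apply/subsetP => v _; rewrite inE ltn_ord.
exists N => n /HN [k_gt0 Vs_n0] o.
have G_rigid : rigid (G n) by apply: rigid_graph_rigid; rewrite /m; lia.
have hPhi_top t :
    hPhi (Phi n (m n)) (k n) (g1 n) (relabel t (G n)) o (Vs n) = top n t.
  exact: hPhi_relabel_rigid.
have s_top : top n (s n) != top n 1%g.
  rewrite /s; case: pickP => [//|none].
  have nkm : (n + k n < m n)%N by rewrite /m; lia.
  have [t] := exists_perm_count_top_neq (n_le_m n)
    (Phi n (m n) (g1 n) (G n) (Vs n)) nkm k_gt0 Vs_n0.
  have /negbT := none t^-1%g; rewrite negbK /top invgK invg1 mul1g => /eqP ->.
  by rewrite eqxx.
split.
  apply: dTV_point_mass_gt0; have := hPhi_top 1%g; rewrite relabel1 => ->.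
  rewrite hPhi_top eq_sym; exact: s_top.
apply: law_point_mass_eq.
by apply: hhat_agnostic; exists (s n).
Qed.
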